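(* Let $t_1$ and $t_2$ be two terms. If the Martelli–Montanari unification algorithm, applied to the equation $t_1 = t_2$, returns a solved set of equations $S$, then the typed unification algorithm applied to $t_1$ and $t_2$ is also successful and returns the same set of equations $S$.
   Context: Terms are built from variables and function symbols: a variable is a term, and if $f$ is an $n$-ary function symbol and $t_1,\dots,t_n$ are terms then $f(t_1,\dots,t_n)$ is a term; a $0$-ary function symbol is a constant. Every constant has an associated base type, one of int, float, atom, string. Typed unification algorithm: given terms $t_1,t_2$, start from the pair $(S,F)=(\{t_1=t_2\},\mathit{true})$, where $F$ is a flag, and rewrite it with the following rules until none applies or the algorithm halts with $\mathit{wrong}$ ($c,d$ denote constants, $X$ a variable, $\mathit{Rest}$ the remaining equations): 1. $(\{f(t_1,\dots,t_n)=f(s_1,\dots,s_n)\}\cup \mathit{Rest},F)\to(\{t_1=s_1,\dots,t_n=s_n\}\cup\mathit{Rest},F)$; 2. $(\{f(t_1,\dots,t_n)=g(s_1,\dots,s_m)\}\cup\mathit{Rest},F)\to \mathit{wrong}$ if $f\neq g$ or $n\neq m$; 3. $(\{c=c\}\cup\mathit{Rest},F)\to(\mathit{Rest},F)$; 4. $(\{c=d\}\cup\mathit{Rest},F)\to(\mathit{Rest},\mathit{false})$ if $c\neq d$ and $c,d$ have the same type; 5. $(\{c=d\}\cup\mathit{Rest},F)\to\mathit{wrong}$ if $c\neq d$ and $c,d$ have different types; 6. $(\{c=f(t_1,\dots,t_n)\}\cup\mathit{Rest},F)\to\mathit{wrong}$; 7. $(\{f(t_1,\dots,t_n)=c\}\cup\mathit{Rest},F)\to\mathit{wrong}$;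 8. $(\{X=X\}\cup\mathit{Rest},F)\to(\mathit{Rest},F)$; 9. $(\{t=X\}\cup\mathit{Rest},F)\to(\{X=t\}\cup\mathit{Rest},F)$ if $t$ is not a variable; 10. $(\{X=t\}\cup\mathit{Rest},F)\to(\{X=t\}\cup[X\mapsto t](\mathit{Rest}),F)$ if $X$ does not occur in $t$ and $X$ occurs in $\mathit{Rest}$; 11. $(\{X=t\}\cup\mathit{Rest},F)\to(\mathit{Rest},\mathit{false})$ if $X$ occurs in $t$ and $X\neq t$. When no rule applies, the algorithm outputs $\mathit{false}$ if the flag is $\mathit{false}$, and otherwise outputs (succeeds with) the current solved set $S$. *)

From Stdlib Require Import List Arith.
Import ListNotations.

(* Variables and function symbols are named by natural numbers.  A term
   [Fn f args] is the application of the (length args)-ary symbol f;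
   a constant is [Fn c []]. *)
Inductive term : Type :=
| Var (x : nat)
| Fn (f : nat) (args : list term).

Inductive basetype : Type := TInt | TFloat | TAtom | TString.

Definition eqn : Type := (term * term)%type.

Fixpoint occurs (x : nat) (t : term) : Prop :=
  match t with
  | Var y => x = y
  | Fn _ args =>
      (fix go (l : list term) : Prop :=
         match l with
         | [] => False
         | a :: l' => occurs x a \/ go l'
         end) args
  end.

Fixpoint subst (x : nat) (s : term) (t : term) : term :=
  match t with
  | Var y => if Nat.eqb x y then s else Var y
  | Fn f args => Fn f (map (subst x s) args)
  end.

Definition occurs_eqs (x : nat) (E : list eqn) : Prop :=
  exists e, In e E /\ (occurs x (fst e) \/ occurs x (snd e)).

Definition subst_eqs (x : nat) (s : term) (E : list eqn) : list eqn :=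
  map (fun e => (subst x s (fst e), subst x s (snd e))) E.

(* A set of equations is represented by a list; a rule may select any
   equation of the list (written l1 ++ e :: l2, with Rest = l1 ++ l2). *)

Inductive mm_res : Type := MMFail | MMSet (E : list eqn).

Inductive mm_step : list eqn -> mm_res -> Prop :=
| mm_decomp l1 l2 f ss ts :
    length ss = length ts ->
    mm_step (l1 ++ (Fn f ss, Fn f ts) :: l2) (MMSet (combine ss ts ++ l1 ++ l2))
| mm_clash l1 l2 f g ss ts :
    (f <> g \/ length ss <> length ts) ->
    mm_step (l1 ++ (Fn f ss, Fn g ts) :: l2) MMFail
| mm_delete l1 l2 x :
    mm_step (l1 ++ (Var x, Var x) :: l2) (MMSet (l1 ++ l2))
| mm_swap l1 l2 t x :
    (forall y, t <> Var y) ->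
    mm_step (l1 ++ (t, Var x) :: l2) (MMSet ((Var x, t) :: l1 ++ l2))
| mm_elim l1 l2 x t :
    ~ occurs x t -> occurs_eqs x (l1 ++ l2) ->
    mm_step (l1 ++ (Var x, t) :: l2)
            (MMSet ((Var x, t) :: subst_eqs x t (l1 ++ l2)))
| mm_occ l1 l2 x t :
    occurs x t -> t <> Var x ->
    mm_step (l1 ++ (Var x, t) :: l2) MMFail.

Inductive mm_star : list eqn -> list eqn -> Prop :=
| mm_star_refl E : mm_star E E
| mm_star_step E E' E'' : mm_step E (MMSet E') -> mm_star E' E'' -> mm_star E E''.

Inductive ty_res : Type := Wrong | TSt (E : list eqn) (F : bool).

Inductive ty_step (ty : nat -> basetype) : list eqn * bool -> ty_res -> Prop :=
| ty_r1 l1 l2 f ss ts F :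
    ss <> [] -> length ss = length ts ->
    ty_step ty (l1 ++ (Fn f ss, Fn f ts) :: l2, F) (TSt (combine ss ts ++ l1 ++ l2) F)
| ty_r2 l1 l2 f g ss ts F :
    (f <> g \/ length ss <> length ts) -> ~ (ss = [] /\ ts = []) ->
    ty_step ty (l1 ++ (Fn f ss, Fn g ts) :: l2, F) Wrong
| ty_r3 l1 l2 c F :
    ty_step ty (l1 ++ (Fn c [], Fn c []) :: l2, F) (TSt (l1 ++ l2) F)
| ty_r4 l1 l2 c d F :
    c <> d -> ty c = ty d ->
    ty_step ty (l1 ++ (Fn c [], Fn d []) :: l2, F) (TSt (l1 ++ l2) false)
| ty_r5 l1 l2 c d F :
    c <> d -> ty c <> ty d ->
    ty_step ty (l1 ++ (Fn c [], Fn d []) :: l2, F) Wrong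
| ty_r6 l1 l2 c f ts F :
    ts <> [] ->
    ty_step ty (l1 ++ (Fn c [], Fn f ts) :: l2, F) Wrong
| ty_r7 l1 l2 c f ts F :
    ts <> [] ->
    ty_step ty (l1 ++ (Fn f ts, Fn c []) :: l2, F) Wrong
| ty_r8 l1 l2 x F :
    ty_step ty (l1 ++ (Var x, Var x) :: l2, F) (TSt (l1 ++ l2) F)
| ty_r9 l1 l2 t x F :
    (forall y, t <> Var y) ->
    ty_step ty (l1 ++ (t, Var x) :: l2, F) (TSt ((Var x, t) :: l1 ++ l2) F)
| ty_r10 l1 l2 x t F :
    ~ occurs x t -> occurs_eqs x (l1 ++ l2) ->
    ty_step ty (l1 ++ (Var x, t) :: l2, F)
            (TSt ((Var x, t) :: subst_eqs x t (l1 ++ l2)) F)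
| ty_r11 l1 l2 x t F :
    occurs x t -> t <> Var x ->
    ty_step ty (l1 ++ (Var x, t) :: l2, F) (TSt (l1 ++ l2) false).

Inductive ty_star (ty : nat -> basetype) : list eqn * bool -> list eqn * bool -> Prop :=
| ty_star_refl s : ty_star ty s s
| ty_star_step s E' F' s'' :
    ty_step ty s (TSt E' F') -> ty_star ty (E', F') s'' -> ty_star ty s s''.

(* Every successful MM step is a typed step that leaves the flag alone: the
   decomposition of two equal constants is rule 3, and the other MM rules are
   rules 1, 8, 9 and 10.  So an MM derivation replays as a typed derivation
   with flag [true].  Conversely every typed rule has an MM counterpart (the
   constant rules 4-7 are instances of MM's clash), hence a set to which no MM
   rule applies is also normal for the typed algorithm. *)
From Stdlib Require Import List.
Import ListNotations.

Lemma mm_step_ty_step ty E E' F :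
  mm_step E (MMSet E') -> ty_step ty (E, F) (TSt E' F).
Proof.
  intros H; remember (MMSet E') as r eqn:Hr; destruct H; inversion Hr; subst.
  - destruct ss as [|s ss].
    + destruct ts; [simpl; apply ty_r3 | discriminate].
    + apply ty_r1; [discriminate | assumption].
  - apply ty_r8.
  - apply ty_r9; assumption.
  - apply ty_r10; assumption.
Qed.

Lemma mm_star_ty_star ty E S F : mm_star E S -> ty_star ty (E, F) (S, F).
Proof.
  induction 1.
  - apply ty_star_refl.
  - eapply ty_star_step; [apply mm_step_ty_step; eassumption | assumption].
Qed.

Lemma ty_step_mm_step ty E F r : ty_step ty (E, F) r -> exists r', mm_step E r'.
Proof.
  intros H; remember (E, F) as s eqn:Hs; destruct H; injection Hs as <- _; eexists.
  - apply mm_decomp; assumption.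
  - apply mm_clash; assumption.
  - apply (mm_decomp l1 l2 c [] []); reflexivity.
  - apply mm_clash; left; assumption.
  - apply mm_clash; left; assumption.
  - apply mm_clash; right; destruct ts; [congruence | discriminate].
  - apply mm_clash; right; destruct ts; [congruence | discriminate].
  - apply mm_delete.
  - apply mm_swap; assumption.
  - apply mm_elim; assumption.
  - apply mm_occ; assumption.
Qed.

Theorem theorem1 (ty : nat -> basetype) (t1 t2 : term) (S : list eqn) :
  mm_star [(t1, t2)] S ->
  (forall r, ~ mm_step S r) ->
  ty_star ty ([(t1, t2)], true) (S, true) /\
  (forall r, ~ ty_step ty (S, true) r).
Proof.
  intros Hderiv Hnormal; split.
  - apply mm_star_ty_star; assumption.
  - intros r Hr; destruct (ty_step_mm_step _ _ _ _ Hr) as [r' Hr'].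
    exact (Hnormal r' Hr').
Qed.
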